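(* Every $\gamma_{\rm tg}$-critical graph is open twin-free.
   Context: A graph is open twin-free if it has no two distinct vertices $u,v$ with $N(u)=N(v)$. Total domination game on a graph without isolated vertices: Dominator and Staller alternately choose vertices, each chosen vertex must be adjacent to some vertex not yet totally dominated; the game ends when no legal move exists; Dominator minimizes, Staller maximizes the number of moves; $\gamma_{\rm tg}(G)$ is the number of moves in the Dominator-start game under optimal play. $G|v$ is $G$ with $v$ declared already totally dominated, with $\gamma_{\rm tg}(G|v)$ defined analogously. $G$ is $\gamma_{\rm tg}$-critical if $\gamma_{\rm tg}(G|v)<\gamma_{\rm tg}(G)$ for every vertex $v$. *)

From mathcomp Require Import all_boot.
Set Implicit Arguments. Unset Strict Implicit. Unset Printing Implicit Defensive.

(* A finite simple graph on vertex set T is a symmetric irreflexive relation e. *)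

Definition nbh (T : finType) (e : rel T) (x : T) : {set T} := [set y | e x y].

(* Game state: D = set of vertices already totally dominated; dom = true iff
   it is Dominator's turn.  A vertex x is a legal move iff N(x) contains a
   vertex not yet totally dominated, i.e. ~~ (nbh x \subset D); playing x
   replaces D by D :|: nbh x.  gval n D dom is the number of moves still to be
   played under optimal play (Dominator minimizes, Staller maximizes), computed
   with fuel n.  Each move strictly enlarges D, so at most #|T| moves remain and
   fuel #|T|.+1 is always sufficient. *)
Fixpoint gval (T : finType) (e : rel T) (n : nat) (D : {set T}) (dom : bool)
  : nat :=
  if n is n'.+1 then
    if [exists x, ~~ (nbh e x \subset D)] then
      if dom then
        \big[minn/#|T|.+1]_(x | ~~ (nbh e x \subset D)) (gval e n' (D :|: nbh e x) false).+1
      else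
        \big[maxn/0]_(x | ~~ (nbh e x \subset D)) (gval e n' (D :|: nbh e x) true).+1
    else 0
  else 0.

Definition gamma_tg (T : finType) (e : rel T) : nat := gval e #|T|.+1 set0 true.

(* gamma_tg(G|v): Dominator-start game with v declared already totally dominated *)
Definition gamma_tg_at (T : finType) (e : rel T) (v : T) : nat :=
  gval e #|T|.+1 [set v] true.

Definition gamma_tg_critical (T : finType) (e : rel T) : Prop :=
  forall v : T, gamma_tg_at e v < gamma_tg e.

Definition open_twin_free (T : finType) (e : rel T) : Prop :=
  forall u v : T, u != v -> nbh e u != nbh e v.

From mathcomp Require Import all_boot.

Set Implicit Arguments.
Unset Strict Implicit.
Unset Printing Implicit Defensive.

(* If u and v are open twins, every open neighbourhood contains both or
   neither of them, so along any play started from a state where u and v are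
   equally dominated they stay equally dominated.  In such states declaring u
   dominated in advance changes neither the legal moves nor the resulting
   states, hence gamma_tg(G|u) = gamma_tg(G), contradicting criticality. *)

Lemma subset_setU1_redundant (T : finType) (A D : {set T}) (u v : T) :
  v != u -> (u \in A -> v \in A) -> (v \in D -> u \in D) ->
  (A \subset u |: D) = (A \subset D).
Proof.
move=> vu uAvA vDuD; apply/idP/idP => [/subsetP AuD|]; last first.
  by move/subset_trans; apply; apply: subsetUr.
apply/subsetP => y yA; case/setU1P: (AuD y yA) => [yu|//]; subst y.
by apply: vDuD; case/setU1P: (AuD v (uAvA yA)) => [/eqP|//]; rewrite (negbTE vu).
Qed.

Section OpenTwins.
Variables (T : finType) (e : rel T) (u v : T).
Hypotheses (e_sym : symmetric e) (uv : u != v) (twins : nbh e u = nbh e v).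

Lemma mem_nbh_twins x : (u \in nbh e x) = (v \in nbh e x).
Proof.
have : (x \in nbh e u) = (x \in nbh e v) by rewrite twins.
by rewrite !inE (e_sym u x) (e_sym v x).
Qed.

Lemma subset_nbh_setU1_twin (D : {set T}) x : (u \in D) = (v \in D) ->
  (nbh e x \subset u |: D) = (nbh e x \subset D).
Proof.
move=> uDvD; apply: (subset_setU1_redundant (v := v)).
- by rewrite eq_sym.
- by rewrite mem_nbh_twins.
- by rewrite uDvD.
Qed.

Lemma mem_setU_nbh_twins (D : {set T}) x : (u \in D) = (v \in D) ->
  (u \in D :|: nbh e x) = (v \in D :|: nbh e x).
Proof. by move=> uDvD; rewrite !in_setU uDvD mem_nbh_twins. Qed.

Lemma gval_setU1_twin n (D : {set T}) (dom : bool) : (u \in D) = (v \in D) ->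
  gval e n (u |: D) dom = gval e n D dom.
Proof.
elim: n D dom => [//|n IHn] D dom uDvD /=.
have legal x := subset_nbh_setU1_twin x uDvD.
rewrite (eq_existsb (fun x => congr1 negb (legal x))).
case: ifP => // _; case: dom; apply: eq_big => [x|x _]; rewrite ?legal //;
  by rewrite -setUA IHn // mem_setU_nbh_twins.
Qed.

Lemma gamma_tg_at_twin : gamma_tg_at e u = gamma_tg e.
Proof.
by rewrite /gamma_tg_at -[[set u]]setU0 gval_setU1_twin // !inE.
Qed.

End OpenTwins.

Theorem corollary4p3 (T : finType) (e : rel T)
  (e_sym : symmetric e) (e_irr : irreflexive e)
  (no_isolated : forall x : T, exists y : T, e x y) :
  gamma_tg_critical e -> open_twin_free e.
Proof.
move=> crit u v uv; apply/negP => /eqP twins.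
by have := crit u; rewrite (gamma_tg_at_twin e_sym uv twins) ltnn.
Qed.
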